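(* Let $\mathcal G$ be a DAG, $\boldsymbol\alpha$ a proper set of directed paths in $\mathcal G$, and $(WY)$ an edge of $\mathcal G$. Then $\lhd_{(WY)}(\boldsymbol\alpha)$ is proper.
   Context: A directed path is a sequence of distinct vertices $A_1\to A_2\to\cdots\to A_k$ joined by directed edges; a prefix subpath is a contiguous initial segment $A_1\to\cdots\to A_m$. A set of directed paths is proper if no path in it is a prefix subpath of another path in it. For an edge $(WY)$ (i.e. $W\to Y$), the funnel operator $\lhd_{(WY)}$ maps a set of directed paths $\boldsymbol\alpha$ to the set obtained by replacing each path of the form $(A,\ldots,W,Y)$ by $(A,\ldots,W)$, removing all paths that contain $W$ but do not have $(W,Y)$ as a suffix, and keeping all other paths intact. *)

From mathcomp Require Import all_boot.
Set Implicit Arguments. Unset Strict Implicit. Unset Printing Implicit Defensive.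

Definition dag (T : finType) (e : rel T) : Prop :=
  forall (x : T) (p : seq T), path e x p -> ~~ e (last x p) x.

Definition dpath (T : finType) (e : rel T) (s : seq T) : Prop :=
  if s is x :: s' then path e x s' && uniq s else False.

Definition pathset (T : finType) := seq T -> Prop.

Definition proper_paths (T : finType) (e : rel T) (a : pathset T) : Prop :=
  (forall p, a p -> dpath e p) /\
  (forall p q, a p -> a q -> p <> q -> ~~ prefix p q).

Definition funnel (T : finType) (W Y : T) (a : pathset T) : pathset T :=
  fun q => exists2 p, a p &
    ((exists r, p = rcons (rcons r W) Y /\ q = rcons r W)
     \/ (W \notin p /\ q = p)).

From mathcomp Require Import all_boot.

Set Implicit Arguments.
Unset Strict Implicit.
Unset Printing Implicit Defensive.

(* A truncated path is a nonempty prefix of a directed path, hence a directed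
   path.  If one image path were a proper prefix of another:
   both truncated is impossible since W occurs only at the end of the longer
   one; a truncated one inside a kept one would put W on the kept path; a kept
   one inside a truncated one lifts to a prefix of its preimage, contradicting
   properness of the original set. *)

Section PrefixFacts.

Variable T : eqType.
Implicit Types (r s : seq T) (x : T).

Lemma mem_prefix r s : prefix r s -> {subset r <= s}.
Proof. by case/prefixP=> t -> x; rewrite mem_cat => ->. Qed.

Lemma prefix_rcons2 r s x y : prefix r (rcons s x) -> prefix r (rcons (rcons s x) y).
Proof. by move/prefix_trans; apply; apply: prefix_rcons. Qed.

Lemma uniq_prefix_rcons r s x :
  uniq (rcons s x) -> prefix (rcons r x) (rcons s x) -> r = s.
Proof.
move=> uniq_sx /prefixP[t]; case/lastP: t => [|t y].
  by rewrite cats0 => /rcons_inj[].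
rewrite -rcons_cat => /rcons_inj[def_s _]; move: uniq_sx.
by rewrite rcons_uniq def_s mem_cat mem_rcons mem_head.
Qed.

End PrefixFacts.

Section DirectedPaths.

Variables (T : finType) (e : rel T).

Lemma dpath_uniq s : dpath e s -> uniq s.
Proof. by case: s => [|x s] //= /andP[]. Qed.

Lemma dpath_prefix r s : r != [::] -> prefix r s -> dpath e s -> dpath e r.
Proof.
case: r => [|x r] // _; case: s => [|y s] // xr_ys /andP[path_s uniq_ys].
have /andP[/eqP def_x r_s] : (x == y) && prefix r s by rewrite -prefix_cons.
by rewrite /dpath (prefix_uniq xr_ys uniq_ys) andbT def_x (prefix_path r_s path_s).
Qed.

End DirectedPaths.

Section Funnel.

Variables (T : finType) (e : rel T) (W Y : T) (a : pathset T).
Hypothesis a_proper : proper_paths e a.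

Lemma funnel_dpath q : funnel W Y a q -> dpath e q.
Proof.
case: a_proper => a_dpath _ [p a_p [[r [def_p ->]] | [_ ->]]]; last exact: a_dpath.
apply: dpath_prefix (a_dpath _ a_p); rewrite ?def_p ?prefix_rcons //.
by case: r {def_p}.
Qed.

Lemma funnel_prefix_free q1 q2 :
  funnel W Y a q1 -> funnel W Y a q2 -> q1 <> q2 -> ~~ prefix q1 q2.
Proof.
case: a_proper => a_dpath a_free.
move=> [p1 a_p1 [[r1 [? ->]] | [W'p1 ->]]] [p2 a_p2 [[r2 [? ->]] | [W'p2 ->]]] q12;
  subst; apply/negP => pre.
- have := dpath_uniq (a_dpath _ a_p2); rewrite rcons_uniq => /andP[_ uniq_r2W].
  by apply: q12; rewrite (uniq_prefix_rcons uniq_r2W pre).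
- by move: W'p2; rewrite (mem_prefix pre) // mem_rcons mem_head.
- have p12 : p1 <> rcons (rcons r2 W) Y.
    by move=> def_p1; move: W'p1; rewrite def_p1 mem_rcons in_cons mem_rcons mem_head orbT.
  by move: (a_free _ _ a_p1 a_p2 p12); rewrite prefix_rcons2.
- by move: (a_free _ _ a_p1 a_p2 q12); rewrite pre.
Qed.

End Funnel.

Theorem lemma1 (T : finType) (e : rel T) (a : pathset T) (W Y : T) :
  dag e -> proper_paths e a -> e W Y -> proper_paths e (funnel W Y a).
Proof.
move=> _ a_proper _; split.
- exact: funnel_dpath a_proper.
- exact: funnel_prefix_free a_proper.
Qed.
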